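(* Let $n,m\ge1$ and let $I=(\bar v_1,\dots,\bar v_m,\bar v)$ with $\bar v_i,\bar v\in\mathbb{Z}_3^n$. Set $\bar v'=\bar v+\sum_{i=1}^m\bar v_i$ and let $E_I$ be the equation $$\prod_{i=1}^m z_i^{-1}c_{\bar v_i}z_i=c_{\bar v'}$$ over $\mathbb{Z}_3^n\rtimes\mathbb{Z}_3^\ast$, where $c_{\bar w}=(\bar w,1)$. Then there exist $\varepsilon_1,\dots,\varepsilon_m\in\{0,1\}$ with $\sum_{i=1}^m\varepsilon_i\bar v_i=\bar v$ in $\mathbb{Z}_3^n$ if and only if $E_I$ has a solution $(z_1,\dots,z_m)$ in $\mathbb{Z}_3^n\rtimes\mathbb{Z}_3^\ast$.
   Context: $\mathbb{Z}_p^n\rtimes\mathbb{Z}_p^\ast$ is the set of pairs $(\bar x,\alpha)$ with $\bar x\in\mathbb{Z}_p^n$, $\alpha\in\mathbb{Z}_p^\ast$, with multiplication $(\bar x,\alpha)(\bar y,\beta)=(\bar x+\alpha\bar y,\alpha\beta)$ (scalar multiplication mod $p$). *)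

From mathcomp Require Import all_boot all_order all_algebra.
Set Implicit Arguments. Unset Strict Implicit. Unset Printing Implicit Defensive.
Import GRing.Theory.
Local Open Scope ring_scope.

(* The group Z_3^n ⋊ Z_3^*: pairs (x, a) with x in Z_3^n (row vectors over
   'F_3) and a a unit of 'F_3, with (x,a)(y,b) = (x + a y, a b). *)
Definition sd3 (n : nat) : Type := ('rV['F_3]_n * {unit 'F_3})%type.

Definition sd_mul n (g h : sd3 n) : sd3 n :=
  (g.1 + val g.2 *: h.1, (g.2 * h.2)%g).

Definition sd_one n : sd3 n := (0, 1%g).

Definition sd_inv n (g : sd3 n) : sd3 n :=
  (- (val (g.2^-1)%g *: g.1), (g.2^-1)%g).

Definition sd_c n (w : 'rV['F_3]_n) : sd3 n := (w, 1%g).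

Definition sd_prod n m (g : 'I_m -> sd3 n) : sd3 n :=
  foldr (@sd_mul n) (@sd_one n) [seq g i | i <- enum 'I_m].

(* Conjugating c_w by z = (x, a) gives c_(a^-1 w), and a product of elements
   c_w is c of the sum, so E_I says that sum_i a_i v_i = v + sum_i v_i for the
   units a_i = (z_i.2)^-1 of Z_3.  Those units are 1 and -1 = 1 + 1, i.e.
   a_i = 1 + eps_i with eps_i in {0, 1}, and the equation becomes
   sum_i eps_i v_i = v. *)
From mathcomp Require Import all_boot all_order all_algebra.
Import GRing.Theory.
Local Open Scope ring_scope.

Lemma F3_unit_val (u : {unit 'F_3}) : val u = 1 + (val u == -1)%:R.
Proof.
have : val u != 0 by rewrite -unitfE; exact: valP.
by move: (val u) => -[[|[|[|k]]] ?] // _; apply/eqP.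
Qed.

Lemma F3_unit_bit (b : bool) : {u : {unit 'F_3} | val (u^-1)%g = 1 + b%:R}.
Proof.
have uN1 : (-1 : 'F_3) \is a GRing.unit by rewrite unitrN1.
exists (if b then Sub (-1) uN1 else 1%g : {unit 'F_3}).
by case: b; rewrite /= ?invr1 ?addr0 // invrN1; apply/eqP.
Qed.

Lemma sd_c_inj n : injective (@sd_c n).
Proof. by move=> w w' []. Qed.

Lemma sd_conj_c n (z : sd3 n) (w : 'rV['F_3]_n) :
  sd_mul (sd_inv z) (sd_mul (sd_c w) z) = sd_c (val (z.2^-1)%g *: w).
Proof.
case: z => x a; rewrite /sd_mul /sd_inv /sd_c /=.
by rewrite scale1r mul1g mulVg scalerDr addrCA addNr addr0.
Qed.

Lemma sd_prod_c n m (f : 'I_m -> 'rV['F_3]_n) :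
  sd_prod (fun i => sd_c (f i)) = sd_c (\sum_(i < m) f i).
Proof.
rewrite /sd_prod (_ : \sum_(i < m) f i = \sum_(i <- enum 'I_m) f i); last first.
  by rewrite big_enum.
elim: (enum 'I_m) => [|i s IH] /=; first by rewrite big_nil.
by rewrite IH big_cons /sd_mul /sd_c /= scale1r mul1g.
Qed.

Lemma sd_prod_conj_c n m (z : 'I_m -> sd3 n) (vs : 'I_m -> 'rV['F_3]_n) :
  sd_prod (fun i => sd_mul (sd_inv (z i)) (sd_mul (sd_c (vs i)) (z i)))
  = sd_c (\sum_(i < m) val ((z i).2^-1)%g *: vs i).
Proof.
rewrite -sd_prod_c /sd_prod; congr foldr.
by apply: eq_map => i; rewrite sd_conj_c.
Qed.

Lemma sum_scale_1_plus_bit n m (eps : 'I_m -> bool) (vs : 'I_m -> 'rV['F_3]_n) :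
  \sum_(i < m) (1 + (eps i)%:R) *: vs i
  = \sum_(i < m) (eps i)%:R *: vs i + \sum_(i < m) vs i.
Proof. by rewrite addrC -big_split; apply: eq_bigr => i _; rewrite scalerDl scale1r. Qed.

Theorem proposition4p6 (n m : nat) (hn : (1 <= n)%N) (hm : (1 <= m)%N)
    (vs : 'I_m -> 'rV['F_3]_n) (v : 'rV['F_3]_n) :
  (exists eps : 'I_m -> bool, \sum_(i < m) (eps i)%:R *: vs i = v) <->
  (exists z : 'I_m -> sd3 n,
     sd_prod (fun i => sd_mul (sd_inv (z i)) (sd_mul (sd_c (vs i)) (z i)))
     = sd_c (v + \sum_(i < m) vs i)).
Proof.
split=> [[eps <-] | [z]]; rewrite ?sd_prod_conj_c.
- exists (fun i => (0, sval (F3_unit_bit (eps i)))).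
  rewrite sd_prod_conj_c -sum_scale_1_plus_bit.
  by congr sd_c; apply: eq_bigr => i _; rewrite (svalP (F3_unit_bit _)).
- move/sd_c_inj => Hz; exists (fun i => val ((z i).2^-1)%g == -1).
  apply: (addIr (\sum_(i < m) vs i)); rewrite -sum_scale_1_plus_bit -Hz.
  by apply: eq_bigr => i _; rewrite -F3_unit_val.
Qed.
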